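(* Let $\mathcal{A}$ be a finite set, $u,v\in\Delta(\mathcal{A})$ probability vectors, and $r:\mathcal{A}\to\mathbb{R}$ a reward function. Consider a preference model $\mathbb{P}_r(y=1|a,a')\in[0,1]$ satisfying $\mathbb{P}_r(y=1|a,a')\ge\frac12$ for all $a,a'\in\mathcal{A}$ with $r(a)\ge r(a')$. Then $$\sum_{a\in\mathcal{A}}\sqrt{u(a)v(a)}\le\min_{\gamma>0}\sqrt{\big(\gamma+2\mathbb{P}_r(v\succ u)\big)\log\frac{1+\gamma}{\gamma}},$$ where $\mathbb{P}_r(v\succ u):=\mathbb{E}_{a\sim v,a'\sim u}[\mathbb{P}_r(y=1|a,a')]$. *)

From HB Require Import structures.
From mathcomp Require Import all_boot all_order all_algebra.
From mathcomp Require Import reals exp.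
Set Implicit Arguments. Unset Strict Implicit. Unset Printing Implicit Defensive.
Import Order.TTheory GRing.Theory Num.Theory.
Local Open Scope ring_scope.

Definition is_prob_vec (R : realType) (A : finType) (p : A -> R) : Prop :=
  (forall a, 0 <= p a) /\ \sum_(a : A) p a = 1.

Definition pref_prob (R : realType) (A : finType) (Pref : A -> A -> R)
  (v u : A -> R) : R :=
  \sum_(a : A) \sum_(a' : A) v a * u a' * Pref a a'.

(* Let U(a) be the u-mass of the actions whose reward is at most r(a).
   Cauchy-Schwarz with the weights gamma + U(a) gives
   (sum_a sqrt(u a v a))^2 <= (sum_a v a (gamma + U a)) (sum_a u a / (gamma + U a)).
   The first factor is gamma + E_v[U] <= gamma + 2 P_r(v > u), because the
   preference is at least 1/2 on every pair (a, a') counted by U(a).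
   The second factor is a Riemann sum for the integral of 1/(gamma + x) over
   [0, 1]: removing an action of maximal reward, whose U is the whole mass,
   costs at most the increment of ln (gamma + mass), so the sum telescopes to
   ln ((1 + gamma) / gamma). *)
From HB Require Import structures.
From mathcomp Require Import all_boot all_order all_algebra.
From mathcomp Require Import reals exp.
From mathcomp Require Import ring lra.
Import Order.TTheory GRing.Theory Num.Theory.
Local Open Scope ring_scope.

Lemma sqrtr_mul_le_mean {R : rcfType} (x y : R) : 0 <= x -> 0 <= y ->
  2 * (Num.sqrt x * Num.sqrt y) <= x + y.
Proof.
move=> x_ge0 y_ge0; have := sqr_ge0 (Num.sqrt x - Num.sqrt y).
rewrite sqrrB !sqr_sqrtr // mulr2n; lra.
Qed.

Lemma sum_sqrtM_le {R : rcfType} {I : finType} (a b : I -> R) :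
  (forall i, 0 <= a i) -> (forall i, 0 <= b i) ->
  \sum_i Num.sqrt (a i * b i) <= Num.sqrt ((\sum_i a i) * (\sum_i b i)).
Proof.
move=> a_ge0 b_ge0.
have square : (\sum_i Num.sqrt (a i * b i)) ^+ 2 <= (\sum_i a i) * (\sum_i b i).
  rewrite -(@ler_pM2l _ 2) // expr2 big_distrlr mulr_sumr /=.
  have -> : 2 * ((\sum_i a i) * (\sum_i b i))
          = \sum_i \sum_j (a i * b j + b i * a j).
    rewrite mulr_natl mulr2n {1}big_distrlr mulrC big_distrlr -big_split /=.
    by apply: eq_bigr => i _; rewrite big_split.
  apply: ler_sum => i _; rewrite mulr_sumr; apply: ler_sum => j _.
  have -> : Num.sqrt (a i * b i) * Num.sqrt (a j * b j)
          = Num.sqrt (a i * b j) * Num.sqrt (b i * a j).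
    by rewrite !sqrtrM //; ring.
  by apply: sqrtr_mul_le_mean; apply: mulr_ge0.
have sum_ge0 : 0 <= \sum_i Num.sqrt (a i * b i).
  by apply: sumr_ge0 => i _; apply: sqrtr_ge0.
by rewrite -(ger0_norm sum_ge0) -sqrtr_sqr ler_wsqrtr.
Qed.

Lemma div_le_ln_increment {R : realType} (x y : R) : 0 <= x -> 0 < y ->
  x / (x + y) <= ln (x + y) - ln y.
Proof.
move=> x_ge0 y_gt0.
have xy_gt0 : 0 < x + y by lra.
have ratio : y / (x + y) = 1 + - (x / (x + y)) by field; lra.
have gtN1 : -1 < - (x / (x + y)).
  by rewrite ltrNl opprK ltr_pdivrMr // mul1r; lra.
have := le_ln1Dx gtN1; rewrite -ratio ln_div ?posrE //; lra.
Qed.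

Section MassBelow.
Variables (R : numDomainType) (A : finType) (r u : A -> R).
Hypothesis u_ge0 : forall a, 0 <= u a.

Definition mass_below (S : {set A}) (a : A) : R :=
  \sum_(a' in S | r a' <= r a) u a'.

Lemma mass_below_ge0 (S : {set A}) a : 0 <= mass_below S a.
Proof. by apply: sumr_ge0 => a' _. Qed.

Lemma mass_below_subset (S1 S2 : {set A}) a :
  S1 \subset S2 -> mass_below S1 a <= mass_below S2 a.
Proof.
move=> /subsetP sub12; rewrite /mass_below big_mkcond [X in _ <= X]big_mkcond /=.
apply: ler_sum => a' _; case: ifP => [/andP[/sub12 -> ->] //|_].
by case: ifP.
Qed.

Lemma mass_below_argmax (S : {set A}) k : (forall a, a \in S -> r a <= r k) ->
  mass_below S k = \sum_(a in S) u a.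
Proof. by move=> k_max; apply: eq_bigl => a; apply/andb_idr/k_max. Qed.

End MassBelow.

Arguments mass_below {R A} r u S a.

Section MassBelowTelescope.
Variables (R : realType) (A : finType) (r u : A -> R) (gamma : R).
Hypotheses (u_ge0 : forall a, 0 <= u a) (gamma_gt0 : 0 < gamma).

Lemma sum_div_mass_below_le_ln (S : {set A}) :
  \sum_(a in S) u a / (gamma + mass_below r u S a)
    <= ln (gamma + \sum_(a in S) u a) - ln gamma.
Proof.
have shift_gt0 (T : {set A}) a : 0 < gamma + mass_below r u T a.
  by rewrite ltr_wpDr // mass_below_ge0.
have [n] := ubnP #|S|; elim: n S => // n IH S.
have [->|[k0 k0S] card_lt] := set_0Vmem S; first by rewrite !big_set0 addr0 subrr.
have [k kS_pred k_max] := arg_maxP r k0S.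
have kS : k \in S := kS_pred.
have card_lt' : (#|S :\ k| < n)%N by move: card_lt; rewrite (cardsD1 k S) kS.
rewrite (big_setD1 _ kS) [X in ln (gamma + X)](big_setD1 _ kS) /=.
rewrite mass_below_argmax // (big_setD1 _ kS) /= addrCA.
have mass_ge0 : 0 <= \sum_(a in S :\ k) u a by apply: sumr_ge0.
have head := div_le_ln_increment _ _ (u_ge0 k) (ltr_wpDr mass_ge0 gamma_gt0).
have tail : \sum_(a in S :\ k) u a / (gamma + mass_below r u S a)
         <= \sum_(a in S :\ k) u a / (gamma + mass_below r u (S :\ k) a).
  apply: ler_sum => a _; apply: ler_wpM2l => //.
  by rewrite lef_pV2 ?posrE // lerD2l mass_below_subset ?subsetDl.
have := IH _ card_lt'; lra.
Qed.

End MassBelowTelescope.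

Lemma sum_mass_below_le_pref (R : realType) (A : finType) (r u v : A -> R)
    (Pref : A -> A -> R) :
  (forall a, 0 <= u a) -> (forall a, 0 <= v a) ->
  (forall a a', 0 <= Pref a a') ->
  (forall a a', r a' <= r a -> 1 / 2 <= Pref a a') ->
  \sum_a v a * mass_below r u [set: A] a <= 2 * pref_prob Pref v u.
Proof.
move=> u_ge0 v_ge0 P_ge0 P_half.
rewrite /pref_prob mulr_sumr; apply: ler_sum => a _.
rewrite /mass_below big_mkcond !mulr_sumr; apply: ler_sum => a' _ /=.
have vu_ge0 : 0 <= v a * u a' by apply: mulr_ge0.
rewrite in_setT /=; case: ifP => [/P_half|_]; first by nra.
by rewrite mulr0 mulr_ge0 // mulr_ge0.
Qed.

Theorem lemmaG1 (R : realType) (A : finType) (u v : A -> R) (r : A -> R)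
  (Pref : A -> A -> R)
  (hu : is_prob_vec u) (hv : is_prob_vec v)
  (hP01 : forall a a', 0 <= Pref a a' <= 1)
  (hPr : forall a a', r a' <= r a -> 1 / 2 <= Pref a a') :
  forall gamma : R, 0 < gamma ->
    \sum_(a : A) Num.sqrt (u a * v a)
      <= Num.sqrt ((gamma + 2 * pref_prob Pref v u) * ln ((1 + gamma) / gamma)).
Proof.
move=> gamma gamma_gt0; case: hu => u_ge0 u_sum1; case: hv => v_ge0 v_sum1.
pose w a := gamma + mass_below r u [set: A] a.
have w_gt0 a : 0 < w a by rewrite ltr_wpDr // mass_below_ge0.
have uv_split a : u a * v a = (v a * w a) * (u a / w a).
  by field; rewrite lt0r_neq0.
have vw_ge0 a : 0 <= v a * w a by rewrite mulr_ge0 // ltW.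
have uw_ge0 a : 0 <= u a / w a by rewrite divr_ge0 // ltW.
under eq_bigr do rewrite uv_split.
apply: le_trans (sum_sqrtM_le _ _ vw_ge0 uw_ge0) _.
apply: ler_wsqrtr; apply: ler_pM.
- by apply: sumr_ge0 => a _.
- by apply: sumr_ge0 => a _.
- rewrite /w; under eq_bigr do rewrite mulrDr.
  rewrite big_split /= -mulr_suml v_sum1 mul1r lerD2l.
  by apply: sum_mass_below_le_pref => // a a'; case/andP: (hP01 a a').
have sum_setT (F : A -> R) : \sum_(a in [set: A]) F a = \sum_a F a.
  by apply: eq_bigl => a; rewrite in_setT.
have := @sum_div_mass_below_le_ln R A r u gamma u_ge0 gamma_gt0 [set: A].
by rewrite !sum_setT u_sum1 ln_div ?posrE ?addr_gt0 // [1 + gamma]addrC.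
Qed.
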